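(* Let $q$ be odd, $\alpha,\beta\in\mathbb{F}_{q^2}$ with $\alpha\ne0$ and $(\beta^q-\beta)^2+4\alpha^{q+1}$ a nonsquare in $\mathbb{F}_q$, and let $R_1=(0,\epsilon,1)$, $U_\infty=(1,0,0)$. If $\ell$ is a line of $\mathrm{PG}(2,q^2)$ not through $U_\infty$, then $|\ell\cap\mathrm{pedal}(R_1)|\in\{0,1,2\}$.
   Context: Points of $\mathrm{PG}(2,q^2)$ have homogeneous coordinates $(x,y,z)$. $\zeta$ is a primitive element of $\mathbb{F}_{q^2}$ and $\epsilon=\zeta^{(q+1)/2}$. $\mathcal U_{\alpha\beta}=\{(x,\alpha x^2+\beta x^{q+1}+r,1): x\in\mathbb{F}_{q^2}, r\in\mathbb{F}_q\}\cup\{(0,1,0)\}$, which under the hypotheses is a unital (a set of $q^3+1$ points meeting every line in $1$ or $q+1$ points), and $R_1\notin\mathcal U_{\alpha\beta}$. For a point $P$ not on the unital, $\mathrm{pedal}(P)$ is the set of points of contact of the $q+1$ tangent lines (lines meeting the unital in exactly one point) through $P$. *)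

From HB Require Import structures.
From mathcomp Require Import all_boot all_order all_algebra all_field.
Set Implicit Arguments. Unset Strict Implicit. Unset Printing Implicit Defensive.
Import GRing.Theory.
Local Open Scope ring_scope.

Definition vec (F : finFieldType) := (F * F * F)%type.

Definition dot (F : finFieldType) (u v : vec F) : F :=
  u.1.1 * v.1.1 + u.1.2 * v.1.2 + u.2 * v.2.

Definition pt (F : finFieldType) (v : vec F) : {set vec F} :=
  [set (k * v.1.1, k * v.1.2, k * v.2) | k in [set k : F | k != 0]].

(* P is a point of PG(2,F) (resp. a line, in dual coordinates). *)
Definition isPoint (F : finFieldType) (P : {set vec F}) : bool :=
  [exists v : vec F, (v != ((0, 0, 0) : vec F)) && (P == pt v)].

Definition incident (F : finFieldType) (P L : {set vec F}) : bool :=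
  [forall v in P, forall w in L, dot w v == 0].

(* The set U_{alpha beta} (q is such that F_q is the subfield {r | r^q = r}). *)
Definition unital (F : finFieldType) (q : nat) (alpha beta : F) : {set {set vec F}} :=
  pt ((0, 1, 0) : vec F) |:
  [set pt (x, alpha * x ^+ 2 + beta * x ^+ q.+1 + r, 1) | x in [set: F],
       r in [set r : F | r ^+ q == r]].

(* Q is a point of contact of a tangent line through P: Q lies on U and some line
   through P and Q meets U exactly in Q. *)
Definition pedal (F : finFieldType) (q : nat) (alpha beta : F) (P : {set vec F})
  : {set {set vec F}} :=
  [set Q in unital q alpha beta |
     [exists L : {set vec F}, [&& isPoint L, incident P L, incident Q L &
        [set R in unital q alpha beta | incident R L] == [set Q]]]].

From HB Require Import structures.
From mathcomp Require Import all_boot all_order all_algebra all_field.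
From mathcomp Require Import ring zify.
Import GRing.Theory.
Local Open Scope ring_scope.
Set Implicit Arguments. Unset Strict Implicit. Unset Printing Implicit Defensive.

(* Write z^q for the conjugate of z over F_q and N x := u - u^q with
   u = alpha x^2 + beta x^(q+1).  N is a quadratic form over F_q, anisotropic
   exactly because of the nonsquare hypothesis, and an affine point (x, y) is on
   the unital iff (y - u) - (y - u)^q = 0.  A line Y = m X + eps through R_1
   meeting the unital at x0 with m different from the tangent slope
   2 alpha x0 + (beta - beta^q) x0^q meets it again, so the pedal points are the
   (x, slope(x) x + eps) with N x = -2 eps, and their ordinates all satisfy
   y - y^q = -2 eps.  Two of them on a line X = lam Y + mu therefore differ by
   w (lam, 1) with w in F_q, and N (x + w lam) = N x reads w (B + w N lam) = 0
   with N lam <> 0: one pedal point on the line determines at most one other. *)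

Lemma prim_root_neq0 (R : idomainType) n (z : R) : n.-primitive_root z -> z != 0.
Proof.
move=> prim_z; apply/eqP => z0; have := prim_expr_order prim_z.
by rewrite z0 expr0n gtn_eqF ?(prim_order_gt0 prim_z) // => /eqP; rewrite eq_sym oner_eq0.
Qed.

Section HalfOrder.

Variables (R : idomainType) (n : nat) (z : R).
Hypothesis prim_z : (n.*2).-primitive_root z.

Lemma prim_expr_half_neq1 : z ^+ n != 1.
Proof.
have n_gt0 : (0 < n)%N by rewrite -double_gt0 (prim_order_gt0 prim_z).
by rewrite -(prim_order_dvd prim_z); apply/negP => /(dvdn_leq n_gt0); lia.
Qed.

Lemma prim_expr_half : z ^+ n = -1.
Proof.
have /eqP : (z ^+ n) ^+ 2 = 1 by rewrite -exprM muln2 (prim_expr_order prim_z).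
by rewrite sqrf_eq1 (negbTE prim_expr_half_neq1) => /eqP.
Qed.

Lemma prim_root_even_two_neq0 : (2 : R) != 0.
Proof.
apply: contra_neq prim_expr_half_neq1 => two0.
by apply/eqP; rewrite prim_expr_half -subr_eq0 -opprD -mulr2n two0 oppr0.
Qed.

End HalfOrder.

Lemma odd_sq_predE q : odd q -> (q ^ 2).-1 = (q.-1 * uphalf q).*2.
Proof.
move=> q_odd; have [k ->] : exists k, q = k.*2.+1.
  by exists q./2; rewrite -[q in LHS]odd_double_half q_odd.
by rewrite uphalfE -doubleS half_double /=; lia.
Qed.

Lemma pnat_card_finField (F : finFieldType) p : p \in [pchar F] -> p.-nat #|F|.
Proof.
move=> pcharFp; rewrite (card_pprimeChar pcharFp) pnatX pnat_id ?orbT //.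
exact: pcharf_prime pcharFp.
Qed.

Section Points.

Variable F : finFieldType.

Lemma pt_mem (v : vec F) : v \in pt v.
Proof.
case: v => [[a b] c]; apply/imsetP; exists 1; first by rewrite inE oner_neq0.
by rewrite /= !mul1r.
Qed.

Lemma incident_ptE (v w : vec F) : incident (pt v) (pt w) = (dot w v == 0).
Proof.
apply/idP/eqP => [/forall_inP/(_ v (pt_mem v))/forall_inP/(_ w (pt_mem w))/eqP //|].
move=> vw0; apply/forall_inP => _ /imsetP [k _ ->]; apply/forall_inP => _ /imsetP [l _ ->].
case: v w vw0 => [[a b] c] [[d e] f]; rewrite /dot /= => vw0.
by apply/eqP; rewrite -[RHS](mulr0 (l * k)) -vw0; ring.
Qed.

Lemma pt_affine_inj (x y x' y' : F) :
  pt (x, y, 1) = pt (x', y', 1) -> x = x' /\ y = y'.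
Proof.
move=> e; have := pt_mem (x, y, 1); rewrite e => /imsetP [k _ [-> ->]].
by rewrite mulr1 => <-; rewrite !mul1r.
Qed.

Lemma pt_affine_neq_inf (x y : F) : pt (x, y, 1) != pt (0, 1, 0).
Proof.
apply/eqP => e; have := pt_mem (x, y, 1); rewrite e => /imsetP [k _ [_ _]].
by rewrite mulr0 => /eqP; rewrite oner_eq0.
Qed.

Lemma isPoint_pt (L : {set vec F}) : isPoint L -> exists v, L = pt v.
Proof. by case/existsP=> v /andP [_ /eqP ->]; exists v. Qed.

End Points.

Section ConjugationOverFq.

Variables (q : nat) (F : finFieldType).
Hypothesis card_F : #|F| = (q ^ 2)%N.

Lemma exprq_is_nmod_morphism : nmod_morphism (fun x : F => x ^+ q).
Proof.
have [p _ pcharFp] := finPcharP F.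
have pcharF_q : [pchar F].-nat q.
  rewrite (eq_pnat _ (pcharf_eq pcharFp)).
  by apply: pnat_dvd (pnat_card_finField pcharFp); rewrite card_F dvdn_mull.
split=> [|x y]; last exact: exprDn_pchar.
by rewrite expr0n; case: q pcharF_q.
Qed.

Lemma exprq_is_monoid_morphism : monoid_morphism (fun x : F => x ^+ q).
Proof. by split=> [|x y]; rewrite ?expr1n ?exprMn. Qed.

Definition conjq : {rmorphism F -> F} :=
  HB.pack (fun x : F => x ^+ q)
    (GRing.isNmodMorphism.Build F F _ exprq_is_nmod_morphism)
    (GRing.isMonoidMorphism.Build F F _ exprq_is_monoid_morphism).

Lemma conjqK : involutive conjq.
Proof. by move=> x; rewrite /= -exprM -[(q * q)%N]/(q ^ 2)%N -card_F expf_card. Qed.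

Lemma exprSconjq (x : F) : x ^+ q.+1 = x * conjq x.
Proof. exact: exprS. Qed.

Lemma skewpart_is_zmod_morphism : zmod_morphism (fun z : F => z - conjq z).
Proof. by move=> x y; rewrite rmorphB; ring. Qed.

Definition skewpart : {additive F -> F} :=
  HB.pack (fun z : F => z - conjq z)
    (GRing.isZmodMorphism.Build F F _ skewpart_is_zmod_morphism).

Lemma skewpartE z : skewpart z = z - conjq z.
Proof. by []. Qed.

Lemma skewpart_eq0 z : (skewpart z == 0) = (conjq z == z).
Proof. by rewrite skewpartE subr_eq0 eq_sym. Qed.

Lemma skewpart_fixedM w z : conjq w = w -> skewpart (w * z) = w * skewpart z.
Proof. by move=> wE; rewrite !skewpartE rmorphM wE mulrBr. Qed.

Lemma skewpart_antifixed z : conjq z = - z -> skewpart z = 2 * z.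
Proof. by move=> zE; rewrite skewpartE zE; ring. Qed.

Lemma conjq_skewpart z : conjq (skewpart z) = - skewpart z.
Proof. by rewrite skewpartE rmorphB conjqK opprB. Qed.

Section PrimitiveRoot.

Variable zeta : F.
Hypotheses (q_odd : odd q) (prim_zeta : (q ^ 2).-1.-primitive_root zeta).

Lemma conjq_prim_expr_half : conjq (zeta ^+ (q.+1)./2) = - zeta ^+ (q.+1)./2.
Proof.
have q_gt0 : (0 < q)%N by case: q q_odd.
rewrite /= -exprM -{2}(prednK q_gt0) mulnS exprD [(_ * q.-1)%N]mulnC.
by rewrite (prim_expr_half (n := (q.-1 * uphalf q)%N)) ?mulrN1 // -odd_sq_predE.
Qed.

End PrimitiveRoot.

Section Unital.

Variables alpha beta : F.
Hypothesis disc_nonsquare : ~ (exists y : F, y ^+ q = y /\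
  y ^+ 2 = (beta ^+ q - beta) ^+ 2 + 4 * alpha ^+ q.+1).

Definition unital_poly (x : F) := alpha * x ^+ 2 + beta * x ^+ q.+1.

Definition tangent_slope (x : F) := 2 * alpha * x + (beta - conjq beta) * conjq x.

Local Ltac conj_simpl :=
  rewrite ?skewpartE /unital_poly /tangent_slope ?exprSconjq
    ?(conjqK, rmorphD, rmorphB, rmorphN, rmorphM, rmorphXn, rmorph_nat).

Lemma skewpart_secant m e x t :
  skewpart (m * (x + t) + e - unital_poly (x + t)) =
  skewpart (m * x + e - unital_poly x) - skewpart ((tangent_slope x - m) * t)
  - skewpart (unital_poly t).
Proof. by conj_simpl; ring. Qed.

Lemma skewpart_unital_polyD x t :
  skewpart (unital_poly (x + t)) =
  skewpart (unital_poly x) + skewpart (tangent_slope x * t) + skewpart (unital_poly t).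
Proof. by conj_simpl; ring. Qed.

Lemma skewpart_unital_polyZ w u : conjq w = w ->
  skewpart (unital_poly (w * u)) = w ^+ 2 * skewpart (unital_poly u).
Proof. by move=> wE; conj_simpl; rewrite wE; ring. Qed.

Lemma skewpart_tangent_slope_diag x :
  skewpart (tangent_slope x * x) = 2 * skewpart (unital_poly x).
Proof. by conj_simpl; ring. Qed.

Lemma skewpart_unital_poly_eq0 u : skewpart (unital_poly u) = 0 -> u = 0.
Proof.
move=> N0; apply/eqP/negPn/negP => u_neq0.
have cu_neq0 : conjq u != 0 by rewrite fmorph_eq0.
have {}N0 : conjq beta - beta =
            (alpha * u ^+ 2 - conjq alpha * conjq u ^+ 2) / (u * conjq u).
  apply: (mulIf (mulf_neq0 u_neq0 cu_neq0)); rewrite mulfVK ?mulf_neq0 //.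
  by apply/eqP; rewrite -subr_eq0 -oppr_eq0 -N0; conj_simpl; apply/eqP; ring.
apply: disc_nonsquare.
exists ((alpha * u ^+ 2 + conjq alpha * conjq u ^+ 2) / (u * conjq u)); split.
  by rewrite -[_ ^+ q]/(conjq _) fmorph_div; conj_simpl; field; rewrite u_neq0 cu_neq0.
rewrite -[beta ^+ q]/(conjq beta) exprSconjq N0.
by field; rewrite u_neq0 cu_neq0.
Qed.

Lemma secant_second_point kappa m e x0 :
  conjq kappa = - kappa -> kappa != 0 -> (2 : F) != 0 -> m != tangent_slope x0 ->
  skewpart (m * x0 + e - unital_poly x0) = 0 ->
  exists2 x1, x1 != x0 & skewpart (m * x1 + e - unital_poly x1) = 0.
Proof.
move=> kappaE kappa_neq0 two_neq0 m_neq on_x0.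
(* Along x0 + s u, with u := kappa / (slope - m) and s in F_q, the skew part is
   - s (2 kappa + s N u), which also vanishes at s := - 2 kappa / N u. *)
have D_neq0 : tangent_slope x0 - m != 0 by rewrite subr_eq0 eq_sym.
set u := kappa / (tangent_slope x0 - m).
have u_neq0 : u != 0 by rewrite mulf_neq0 ?invr_neq0.
have N_neq0 : skewpart (unital_poly u) != 0.
  by apply: contra_neq u_neq0; apply: skewpart_unital_poly_eq0.
set s := - (2 * kappa) / skewpart (unital_poly u).
have sE : conjq s = s.
  by rewrite /s fmorph_div rmorphN rmorphM rmorph_nat kappaE conjq_skewpart invrN; ring.
have s_neq0 : s != 0 by rewrite /s mulf_neq0 ?invr_neq0 // oppr_eq0 mulf_neq0.
exists (x0 + s * u); first by rewrite addrC -subr_eq0 addrK mulf_neq0.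
rewrite skewpart_secant on_x0 mulrCA [_ * u]mulrC mulfVK //.
rewrite skewpart_fixedM // skewpart_antifixed // skewpart_unital_polyZ //.
by rewrite /s; field.
Qed.

Lemma unital_inf : pt (0, 1, 0) \in unital q alpha beta.
Proof. exact: setU11. Qed.

Lemma affine_in_unitalE x y :
  (pt (x, y, 1) \in unital q alpha beta) = (skewpart (y - unital_poly x) == 0).
Proof.
apply/idP/idP => [|y_U].
  case/setU1P => [/eqP|/imset2P [x' r _ rE /pt_affine_inj [<- ->]]].
    by rewrite (negbTE (pt_affine_neq_inf _ _)).
  by rewrite /unital_poly addrC addKr skewpart_eq0; rewrite inE in rE.
apply/setU1P; right; apply/imset2P; exists x (y - unital_poly x) => //.
  by rewrite inE -skewpart_eq0.
by rewrite -/(unital_poly x) addrC subrK.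
Qed.

Lemma unital_cases P : P \in unital q alpha beta ->
  P = pt (0, 1, 0) \/ exists x y, P = pt (x, y, 1).
Proof.
case/setU1P => [->|/imset2P [x r _ _ ->]]; first by left.
by right; exists x, (alpha * x ^+ 2 + beta * x ^+ q.+1 + r).
Qed.

Section Pedal.

Variable eps : F.
Hypotheses (eps_antifixed : conjq eps = - eps) (eps_neq0 : eps != 0).
Hypothesis two_neq0 : (2 : F) != 0.

Definition pedal_pt x := pt (x, tangent_slope x * x + eps, 1).

Lemma pedal_R1P P : P \in pedal q alpha beta (pt (0, eps, 1)) ->
  exists x, P = pedal_pt x /\ skewpart (unital_poly x) = - (2 * eps).
Proof.
rewrite inE => /andP [P_U /existsP [L /and4P [/isPoint_pt [[[w1 w2] w3] ->]]]].
rewrite incident_ptE /dot /= mulr0 add0r mulr1 => /eqP R1_L P_L /eqP U_L.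
have tangent Q : Q \in unital q alpha beta -> incident Q (pt (w1, w2, w3)) -> Q = P.
  by move=> Q_U Q_L; apply/set1P; rewrite -U_L inE Q_U.
have [w2_0 | w2_neq0] := eqVneq w2 0.
  (* L is the line X = 0, which contains the unital points (0,1,0) and (0,0,1). *)
  have w3_0 : w3 = 0 by rewrite -R1_L w2_0 mul0r add0r.
  have O_U : pt (0, 0, 1) \in unital q alpha beta.
    by rewrite affine_in_unitalE /unital_poly !exprS !mul0r !mulr0 addr0 subrr raddf0.
  have X0_L y z : incident (pt (0, y, z)) (pt (w1, w2, w3)).
    by rewrite incident_ptE /dot /= w2_0 w3_0 mulr0 !mul0r !addr0.
  case/eqP: (pt_affine_neq_inf (0 : F) 0).
  by rewrite (tangent _ O_U (X0_L _ _)) (tangent _ unital_inf (X0_L _ _)).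
set m := - w1 / w2.
have on_L x y : incident (pt (x, y, 1)) (pt (w1, w2, w3)) = (y == m * x + eps).
  rewrite incident_ptE /dot /=.
  have -> : w1 * x + w2 * y + w3 * 1 = w2 * (y - (m * x + eps)).
    by rewrite -[w3](addKr (w2 * eps)) R1_L /m; field.
  by rewrite mulf_eq0 (negbTE w2_neq0) subr_eq0.
have [P_inf | [x0 [y0 P_aff]]] := unital_cases P_U.
  by move: P_L; rewrite P_inf incident_ptE /dot /= !mulr0 mulr1 add0r addr0 (negbTE w2_neq0).
subst P; move: P_U P_L; rewrite affine_in_unitalE on_L => /eqP on_U /eqP y0E.
subst y0.
have m_tangent : m = tangent_slope x0.
  apply/eqP/negPn/negP => m_neq.
  have [x1 x1_neq on_U1] := secant_second_point eps_antifixed eps_neq0 two_neq0 m_neq on_U.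
  have /pt_affine_inj [x1E _] : pt (x1, m * x1 + eps, 1) = pt (x0, m * x0 + eps, 1).
    by apply: tangent; rewrite ?affine_in_unitalE ?on_L ?on_U1.
  by rewrite x1E eqxx in x1_neq.
have Nx0 : skewpart (unital_poly x0) = - (2 * eps).
  move: on_U; rewrite m_tangent !(raddfB skewpart) (raddfD skewpart).
  rewrite skewpart_tangent_slope_diag (skewpart_antifixed eps_antifixed) => N_eq.
  by apply/eqP; rewrite -subr_eq0 -N_eq; apply/eqP; ring.
by exists x0; rewrite m_tangent.
Qed.

Lemma pedal_on_line a b c x : a != 0 ->
  skewpart (unital_poly x) = - (2 * eps) -> incident (pedal_pt x) (pt (a, b, c)) ->
  exists x1, forall x', skewpart (unital_poly x') = - (2 * eps) ->
    incident (pedal_pt x') (pt (a, b, c)) -> x' = x \/ x' = x1.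
Proof.
move=> a_neq0 Nx x_L; set lam := - (b / a).
set B := skewpart (tangent_slope x * lam); set N := skewpart (unital_poly lam).
exists (x - B / N * lam) => x' Nx' x'_L.
have skew_y z : skewpart (unital_poly z) = - (2 * eps) ->
    skewpart (tangent_slope z * z + eps) = - (2 * eps).
  move=> Nz; rewrite (raddfD skewpart) skewpart_tangent_slope_diag Nz.
  by rewrite (skewpart_antifixed eps_antifixed); ring.
have abscissa z : incident (pedal_pt z) (pt (a, b, c)) ->
    z = lam * (tangent_slope z * z + eps) - c / a.
  rewrite incident_ptE /dot /= => /eqP z_L; apply/eqP; rewrite -subr_eq0.
  have -> : z - (lam * (tangent_slope z * z + eps) - c / a) =
            (a * z + b * (tangent_slope z * z + eps) + c * 1) / a by rewrite /lam; field.
  by rewrite z_L mul0r.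
set w := tangent_slope x' * x' + eps - (tangent_slope x * x + eps).
have wE : conjq w = w by apply/eqP; rewrite -skewpart_eq0 (raddfB skewpart) !skew_y ?subrr.
have x'E : x' = x + w * lam by rewrite (abscissa _ x'_L) {1}(abscissa _ x_L) /w; ring.
have : w * (B + w * N) = 0.
  move: Nx'; rewrite x'E skewpart_unital_polyD Nx mulrCA skewpart_fixedM //.
  rewrite skewpart_unital_polyZ // -/B -/N => h.
  by apply: (addrI (- (2 * eps))); rewrite addr0 -[in RHS]h; ring.
move/eqP; rewrite mulf_eq0 => /orP [/eqP w0|/eqP wB]; first by left; rewrite x'E w0 mul0r addr0.
have [lam0 | lam_neq0] := eqVneq lam 0; first by left; rewrite x'E lam0 mulr0 addr0.
have N_neq0 : N != 0 by apply: contra_neq lam_neq0; apply: skewpart_unital_poly_eq0.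
right; rewrite x'E (_ : w = - (B / N)); first by ring.
by apply: (mulIf N_neq0); rewrite mulNr mulfVK //; apply/eqP; rewrite -addr_eq0 addrC wB.
Qed.

End Pedal.

End Unital.

End ConjugationOverFq.

Unset Implicit Arguments.

Theorem lemma2p4 (q : nat) (F : finFieldType) (hF : #|F| = (q ^ 2)%N) (hq : odd q)
  (alpha beta zeta : F) (ha : alpha != 0)
  (hnsq : ~ (exists y : F, y ^+ q = y /\
            y ^+ 2 = (beta ^+ q - beta) ^+ 2 + 4 * alpha ^+ q.+1))
  (hzeta : (q ^ 2).-1.-primitive_root zeta)
  (ell : {set vec F}) (hell : isPoint ell)
  (hU : ~~ incident (pt ((1, 0, 0) : vec F)) ell) :
  let eps := zeta ^+ (q.+1)./2 in
  (#|[set P in pedal q alpha beta (pt ((0%R, eps, 1%R) : vec F)) | incident P ell]| <= 2)%N.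
Proof.
rewrite /=; set eps := zeta ^+ (q.+1)./2.
have eps_antifixed := conjq_prim_expr_half hF hq hzeta.
have eps_neq0 : eps != 0 by rewrite expf_neq0 // (prim_root_neq0 hzeta).
have two_neq0 : (2 : F) != 0.
  by move: hzeta; rewrite odd_sq_predE // => /prim_root_even_two_neq0.
have [[[a b] c] ell_abc] := isPoint_pt hell; subst ell.
have a_neq0 : a != 0 by move: hU; rewrite incident_ptE /dot /= mulr1 !mulr0 !addr0.
set S := [set P in _ | _].
have S_pedal P : P \in S -> exists x, [/\ P = pedal_pt hF alpha beta eps x,
    skewpart hF (unital_poly q alpha beta x) = - (2 * eps) &
    incident (pedal_pt hF alpha beta eps x) (pt (a, b, c))].
  rewrite inE => /andP [/(pedal_R1P hnsq eps_antifixed eps_neq0 two_neq0) [x [-> Nx]] P_L].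
  by exists x.
have [-> | [P0 /S_pedal [x0 [_ Nx0 x0_L]]]] := set_0Vmem S; first by rewrite cards0.
have [x1 pedal_x01] := pedal_on_line hnsq eps_antifixed a_neq0 Nx0 x0_L.
apply: leq_trans (subset_leq_card (_ : S \subset [set pedal_pt hF alpha beta eps x0;
  pedal_pt hF alpha beta eps x1])) _; last by rewrite cards2; case: (_ != _).
apply/subsetP => P /S_pedal [x [-> Nx x_L]].
by case: (pedal_x01 x Nx x_L) => ->; rewrite !inE eqxx ?orbT.
Qed.
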